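(* Let $(\mathcal{M},\times,1)$ be a cartesian monoidal category with equivalences. Then there is an isomorphism of categories \[ \mathrm{HtyAlg}(\mathbf{CMon},\mathcal{M})\;\cong\;\mathbf{Special}(\Gamma^{\mathrm{op}},\mathcal{M}). \]
   Context: A monoidal category with equivalences is a monoidal category with a class of morphisms (equivalences) containing all isomorphisms, satisfying two-out-of-three under composition, and closed under $\otimes$; cartesian means the monoidal structure is given by chosen finite products. $\Phi$: objects $n=\{0,\dots,n-1\}$ ($n\ge0$), all functions, symmetric monoidal under disjoint union $+$ with unit $0$. $\mathrm{HtyAlg}(\mathbf{CMon},\mathcal{M})$ (homotopy commutative monoids in $\mathcal{M}$) is the category whose objects are colax symmetric monoidal functors $(X,\xi):(\Phi,+,0)\to(\mathcal{M},\times,1)$ (a functor $X$ with natural maps $\xi_{m,n}:X(m+n)\to X(m)\times X(n)$ and $\xi_0:X(0)\to1$ satisfying coassociativity, counit and symmetry axioms, not necessarily invertible) in which $\xi_0$ and all $\xi_{m,n}$ are equivalences, and whose morphisms are monoidal transformations (natural transformations $\sigma$ compatible with the $\xi$'s: $\xi'_{m,n}\sigma_{m+n}=(\sigma_m\times\sigma_n)\xi_{m,n}$, $\xi'_0\sigma_0=\xi_0$). $\Gamma^{\mathrm{op}}$: objects $[n]=\{0,\dots,n\}$, morphisms basepoint-preserving functions. A special $\Gamma$-object in $\mathcal{M}$ is a functor $Y:\Gamma^{\mathrm{op}}\to\mathcal{M}$ such that for every $n\ge0$ the map $(Y(\rho^n_0),\dots,Y(\rho^n_{n-1})):Y[n]\to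 Y[1]^n$ is an equivalence, where $\rho^n_j:[n]\to[1]$ sends $j+1$ to $1$ and everything else to $0$ (equivalently: for all $m,n$ the map $(Y(\pi^1_{m,n}),Y(\pi^2_{m,n})):Y[m+n]\to Y[m]\times Y[n]$ and $Y[0]\to1$ are equivalences, with $\pi^1_{m,n}$ collapsing $m+1,\dots,m+n$ to $0$ and fixing $0,\dots,m$, and $\pi^2_{m,n}$ collapsing $0,\dots,m$ to $0$ and sending $i>m$ to $i-m$). $\mathbf{Special}(\Gamma^{\mathrm{op}},\mathcal{M})$ is the category of special $\Gamma$-objects and natural transformations. *)

From mathcomp Require Import all_boot.
Set Implicit Arguments.
Unset Strict Implicit.
Unset Printing Implicit Defensive.

Record Cat := {
  Ob :> Type;
  Hom : Ob -> Ob -> Type;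
  idm : forall a, Hom a a;
  cmp : forall a b c, Hom b c -> Hom a b -> Hom a c;
  cmp_idl : forall a b (f : Hom a b), cmp (idm b) f = f;
  cmp_idr : forall a b (f : Hom a b), cmp f (idm a) = f;
  cmp_assoc : forall a b c d (h : Hom c d) (g : Hom b c) (f : Hom a b),
      cmp h (cmp g f) = cmp (cmp h g) f }.
Arguments Hom {C} a b : rename.
Arguments idm {C} a : rename.
Arguments cmp {C a b c} g f : rename.

Definition is_iso (C : Cat) (a b : C) (f : Hom a b) : Prop :=
  exists g : Hom b a, cmp g f = idm a /\ cmp f g = idm b.

(* monoidal structure = chosen finite products (terminal object [one],
   binary products [prd] with projections and pairing);
   [equiv] = the class of equivalences. *)
Record CartEqCat := {
  cat :> Cat;
  one : cat;
  bang : forall a : cat, Hom a one;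
  bang_uniq : forall (a : cat) (f : Hom a one), f = bang a;
  prd : cat -> cat -> cat;
  pr1 : forall a b : cat, Hom (prd a b) a;
  pr2 : forall a b : cat, Hom (prd a b) b;
  pair : forall c a b : cat, Hom c a -> Hom c b -> Hom c (prd a b);
  pair_pr1 : forall (c a b : cat) (f : Hom c a) (g : Hom c b),
      cmp (pr1 a b) (pair f g) = f;
  pair_pr2 : forall (c a b : cat) (f : Hom c a) (g : Hom c b),
      cmp (pr2 a b) (pair f g) = g;
  pair_uniq : forall (c a b : cat) (h : Hom c (prd a b)),
      h = pair (cmp (pr1 a b) h) (cmp (pr2 a b) h);
  equiv : forall a b : cat, Hom a b -> Prop;
  equiv_iso : forall (a b : cat) (f : Hom a b), is_iso f -> equiv f;
  equiv_comp : forall (a b c : cat) (f : Hom a b) (g : Hom b c),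
      equiv f -> equiv g -> equiv (cmp g f);
  equiv_2of3_l : forall (a b c : cat) (f : Hom a b) (g : Hom b c),
      equiv (cmp g f) -> equiv g -> equiv f;
  equiv_2of3_r : forall (a b c : cat) (f : Hom a b) (g : Hom b c),
      equiv (cmp g f) -> equiv f -> equiv g;
  equiv_prod : forall (a b a' b' : cat) (f : Hom a a') (g : Hom b b'),
      equiv f -> equiv g -> equiv (pair (cmp f (pr1 a b)) (cmp g (pr2 a b))) }.
Arguments one {M} : rename.
Arguments bang {M} a : rename.
Arguments prd {M} a b : rename.
Arguments pr1 {M a b} : rename.
Arguments pr2 {M a b} : rename.
Arguments pair {M c a b} f g : rename.
Arguments equiv {M a b} f : rename.

Section CartOps.
Variable M : CartEqCat.
Definition fprod (a b a' b' : M) (f : Hom a a') (g : Hom b b') :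
  Hom (prd a b) (prd a' b') := pair (cmp f pr1) (cmp g pr2).
Definition assocM (a b c : M) : Hom (prd (prd a b) c) (prd a (prd b c)) :=
  pair (cmp pr1 pr1) (pair (cmp pr2 pr1) pr2).
Definition swapM (a b : M) : Hom (prd a b) (prd b a) := pair pr2 pr1.
Fixpoint pw (a : M) (n : nat) : M :=
  match n with 0 => one | k.+1 => prd a (pw a k) end.
Fixpoint tup (b a : M) (n : nat) : ('I_n -> Hom b a) -> Hom b (pw a n) :=
  match n return ('I_n -> Hom b a) -> Hom b (pw a n) with
  | 0 => fun _ => bang b
  | k.+1 => fun fs => pair (fs ord0) (@tup b a k (fun j => fs (lift ord0 j)))
  end.
End CartOps.

(* ---------- The category Phi (objects n = 'I_n, all functions, +) ---------- *)
Definition phi_sum m m' n n' (f : 'I_m -> 'I_m') (g : 'I_n -> 'I_n') :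
  'I_(m + n) -> 'I_(m' + n') :=
  fun i => match split i with inl a => lshift n' (f a) | inr b => rshift m' (g b) end.
Definition phi_assoc l m n : 'I_(l + m + n) -> 'I_(l + (m + n)) :=
  cast_ord (esym (addnA l m n)).
Definition phi_lunit n : 'I_(0 + n) -> 'I_n := cast_ord (add0n n).
Definition phi_runit n : 'I_(n + 0) -> 'I_n := cast_ord (addn0 n).
Definition phi_swap m n : 'I_(m + n) -> 'I_(n + m) :=
  fun i => match split i with inl a => rshift n a | inr b => lshift m b end.

Record HtyAlgOb (M : CartEqCat) := {
  hX :> nat -> M;
  hXmap : forall m n, ('I_m -> 'I_n) -> Hom (hX m) (hX n);
  hX_id : forall n, hXmap (fun i : 'I_n => i) = idm (hX n);
  hX_comp : forall l m n (f : 'I_l -> 'I_m) (g : 'I_m -> 'I_n),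
      hXmap (g \o f) = cmp (hXmap g) (hXmap f);
  xi : forall m n, Hom (hX (m + n)) (prd (hX m) (hX n));
  xi0 : Hom (hX 0) one;
  xi_nat : forall m m' n n' (f : 'I_m -> 'I_m') (g : 'I_n -> 'I_n'),
      cmp (xi m' n') (hXmap (phi_sum f g)) = cmp (fprod (hXmap f) (hXmap g)) (xi m n);
  xi_coassoc : forall l m n,
      cmp (assocM _ _ _) (cmp (fprod (xi l m) (idm _)) (xi (l + m) n))
      = cmp (fprod (idm _) (xi m n)) (cmp (xi l (m + n)) (hXmap (@phi_assoc l m n)));
  xi_lunit : forall n,
      cmp pr2 (cmp (fprod xi0 (idm _)) (xi 0 n)) = hXmap (@phi_lunit n);
  xi_runit : forall n,
      cmp pr1 (cmp (fprod (idm _) xi0) (xi n 0)) = hXmap (@phi_runit n);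
  xi_sym : forall m n, cmp (swapM _ _) (xi m n) = cmp (xi n m) (hXmap (@phi_swap m n));
  xi_equiv : forall m n, equiv (xi m n);
  xi0_equiv : equiv xi0 }.
Arguments hXmap {M} X {m n} f : rename.
Arguments xi {M} X m n : rename.
Arguments xi0 {M} X : rename.

Record HtyAlgHom (M : CartEqCat) (X Y : HtyAlgOb M) := {
  hsig :> forall n, Hom (X n) (Y n);
  hsig_nat : forall m n (f : 'I_m -> 'I_n),
      cmp (hXmap Y f) (hsig m) = cmp (hsig n) (hXmap X f);
  hsig_xi : forall m n,
      cmp (xi Y m n) (hsig (m + n)) = cmp (fprod (hsig m) (hsig n)) (xi X m n);
  hsig_xi0 : cmp (xi0 Y) (hsig 0) = xi0 X }.

(* ---------- Gamma^op: objects [n] = 'I_n.+1, basepoint-preserving maps ---------- *)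
Record GMap m n := { gfun :> 'I_m.+1 -> 'I_n.+1; gfun0 : gfun ord0 = ord0 }.

Definition gid n : GMap n n := {| gfun := id; gfun0 := erefl |}.
Lemma gcomp0 l m n (g : GMap m n) (f : GMap l m) : (g \o f) ord0 = ord0.
Proof. by rewrite /= !gfun0. Qed.
Definition gcomp l m n (g : GMap m n) (f : GMap l m) : GMap l n :=
  {| gfun := g \o f; gfun0 := gcomp0 g f |}.

Definition rho_fun n (j : 'I_n) : 'I_n.+1 -> 'I_2 :=
  fun i => if val i == j.+1 then ord_max else ord0.
Lemma rho_fun0 n (j : 'I_n) : rho_fun j ord0 = ord0.
Proof. by []. Qed.
Definition rho n (j : 'I_n) : GMap n 1 := {| gfun := rho_fun j; gfun0 := rho_fun0 j |}.

Record SpecialOb (M : CartEqCat) := {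
  sY :> nat -> M;
  sYmap : forall m n, GMap m n -> Hom (sY m) (sY n);
  sY_id : forall n, sYmap (gid n) = idm (sY n);
  sY_comp : forall l m n (f : GMap l m) (g : GMap m n),
      sYmap (gcomp g f) = cmp (sYmap g) (sYmap f);
  sY_special : forall n, equiv (tup (fun j : 'I_n => sYmap (rho j))) }.
Arguments sYmap {M} Y {m n} f : rename.

Record SpecialHom (M : CartEqCat) (X Y : SpecialOb M) := {
  ssig :> forall n, Hom (X n) (Y n);
  ssig_nat : forall m n (f : GMap m n),
      cmp (sYmap Y f) (ssig m) = cmp (ssig n) (sYmap X f) }.

(* Based maps [m] -> [n] are the same as partial maps {1..m} -> {1..n}: a point
   is undefined when it goes to the basepoint.  A homotopy commutative monoid X
   therefore acts on them: apply X to the total map m -> n + 1 that sends the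
   undefined points to an extra point, then forget that point with
   pr1 o xi_(n,1) : X(n + 1) -> X(n).  Coassociativity and the unit axiom make
   this functorial, and the Segal maps become iterates of xi, hence equivalences.
   Conversely a special Gamma-object restricts along Phi -> Gamma^op (adjoin a
   basepoint) with xi = (Y pi^1, Y pi^2); coassociativity then gives that all xi
   are equivalences by induction from xi_(1,n).  The two constructions are
   inverse on the nose: xi_0 is forced by terminality, xi is determined by its
   projections, and every based map factors as pi^1_(n,1) o (its partial map)_+.
   Monoidal transformations and natural transformations of Gamma-objects have the
   same components. *)

From Stdlib Require Import ProofIrrelevance FunctionalExtensionality.
From mathcomp Require Import all_boot zify.
Set Implicit Arguments.
Unset Strict Implicit.
Unset Printing Implicit Defensive.

Section CartesianCategory.
Variable M : CartEqCat.

Lemma pair_cmp (d c a b : M) (f : Hom c a) (g : Hom c b) (h : Hom d c) :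
  cmp (pair f g) h = pair (cmp f h) (cmp g h).
Proof. by rewrite (pair_uniq (cmp (pair f g) h)) !cmp_assoc pair_pr1 pair_pr2. Qed.

Lemma prd_hom_ext (c a b : M) (h h' : Hom c (prd a b)) :
  cmp pr1 h = cmp pr1 h' -> cmp pr2 h = cmp pr2 h' -> h = h'.
Proof. by move=> e1 e2; rewrite (pair_uniq h) (pair_uniq h') e1 e2. Qed.

Lemma pr1_pair_cmp (d c a b : M) (f : Hom c a) (g : Hom c b) (h : Hom d c) :
  cmp pr1 (cmp (pair f g) h) = cmp f h.
Proof. by rewrite cmp_assoc pair_pr1. Qed.

Lemma pr2_pair_cmp (d c a b : M) (f : Hom c a) (g : Hom c b) (h : Hom d c) :
  cmp pr2 (cmp (pair f g) h) = cmp g h.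
Proof. by rewrite cmp_assoc pair_pr2. Qed.

Lemma pr1_fprod_cmp (c a b a' b' : M) (f : Hom a a') (g : Hom b b')
    (h : Hom c (prd a b)) :
  cmp pr1 (cmp (fprod f g) h) = cmp f (cmp pr1 h).
Proof. by rewrite pr1_pair_cmp cmp_assoc. Qed.


Lemma fprod_pair (c a b a' b' : M) (f : Hom a a') (g : Hom b b')
    (u : Hom c a) (v : Hom c b) :
  cmp (fprod f g) (pair u v) = pair (cmp f u) (cmp g v).
Proof. by rewrite /fprod pair_cmp -!cmp_assoc pair_pr1 pair_pr2. Qed.

Lemma equiv_idm (a : M) : equiv (idm a).
Proof. by apply: equiv_iso; exists (idm a); rewrite cmp_idl. Qed.

Lemma tup_cmp (b' b a : M) n (g : 'I_n -> Hom b a) (h : Hom b' b) :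
  tup (fun j => cmp (g j) h) = cmp (tup g) h.
Proof.
elim: n g => [|n IH] g /=; first by rewrite (bang_uniq (cmp _ _)).
by rewrite pair_cmp -IH.
Qed.

End CartesianCategory.

Ltac prd_simpl := repeat progress rewrite ?pair_cmp -?cmp_assoc ?pair_pr1 ?pair_pr2
  ?pr1_pair_cmp ?pr2_pair_cmp ?pr1_fprod_cmp ?cmp_idl ?cmp_idr /=.
Ltac prd_ext := repeat (first [done | apply: prd_hom_ext; prd_simpl]).

Lemma assocM_iso (M : CartEqCat) (a b c : M) : is_iso (assocM a b c).
Proof.
by exists (pair (pair pr1 (cmp pr1 pr2)) (cmp pr2 pr2)); rewrite /assocM; split; prd_ext.
Qed.

Lemma pr2_one_iso (M : CartEqCat) (a : M) : is_iso (@pr2 M one a).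
Proof.
exists (pair (bang a) (idm a)); split; last by rewrite pair_pr2.
apply: prd_hom_ext; rewrite cmp_idr; last by rewrite pr2_pair_cmp cmp_idl.
by rewrite (bang_uniq (cmp pr1 _)) (bang_uniq pr1).
Qed.

Ltac case_ifs := repeat match goal with
  | |- context [if ?b then _ else _] =>
      lazymatch b with context [if _ then _ else _] => fail | _ => case: (boolP b) => ? end
  end.

Lemma gmap_ext_lift m n (f g : GMap m n) :
  (forall k : 'I_m, (f (lift ord0 k) : nat) = g (lift ord0 k)) -> f = g.
Proof.
case: f g => f f0 [g g0] /= e.
have efg : f = g.
  apply: functional_extensionality => i; apply: val_inj.
  case: (unliftP ord0 i) => [k -> | ->]; first exact: e.
  by rewrite f0 g0.
by subst g; f_equal; apply: proof_irrelevance.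
Qed.

Lemma gcompE l m n (g : GMap m n) (f : GMap l m) i : gcomp g f i = g (f i).
Proof. by []. Qed.

Lemma val_rho n (j : 'I_n) i : (rho j i : nat) = if (i : nat) == j.+1 then 1 else 0.
Proof. by rewrite /= /rho_fun; case: eqP. Qed.

Lemma val_phi_swap m n (i : 'I_(m + n)) :
  val (@phi_swap m n i) = if i < m then n + i else i - m.
Proof. by rewrite /phi_swap; case: splitP => [j|k] /= e; lia. Qed.

Definition gext_fun m n (f : 'I_m -> 'I_n) : 'I_m.+1 -> 'I_n.+1 :=
  fun i => if unlift ord0 i is Some j then lift ord0 (f j) else ord0.

Lemma gext_fun0 m n (f : 'I_m -> 'I_n) : gext_fun f ord0 = ord0.
Proof. by rewrite /gext_fun unlift_none. Qed.

Definition gext m n (f : 'I_m -> 'I_n) : GMap m n :=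
  {| gfun := gext_fun f; gfun0 := gext_fun0 f |}.

Lemma gext_lift m n (f : 'I_m -> 'I_n) j : gext f (lift ord0 j) = lift ord0 (f j).
Proof. by rewrite /= /gext_fun liftK. Qed.

Definition gpi1_fun m n (i : 'I_(m + n).+1) : 'I_m.+1 :=
  insubd ord0 (if i <= m then val i else 0).

Lemma gpi1_fun0 m n : @gpi1_fun m n ord0 = ord0.
Proof. by apply: val_inj; rewrite /gpi1_fun val_insubd. Qed.

Definition gpi1 m n : GMap (m + n) m := {| gfun := @gpi1_fun m n; gfun0 := gpi1_fun0 m n |}.

Definition gpi2_fun m n (i : 'I_(m + n).+1) : 'I_n.+1 :=
  insubd ord0 (if m < i then i - m else 0).

Lemma gpi2_fun0 m n : @gpi2_fun m n ord0 = ord0.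
Proof. by apply: val_inj; rewrite /gpi2_fun val_insubd. Qed.

Definition gpi2 m n : GMap (m + n) n := {| gfun := @gpi2_fun m n; gfun0 := gpi2_fun0 m n |}.

Lemma val_gpi1 m n i : (gpi1 m n i : nat) = if i <= m then i : nat else 0.
Proof.
by rewrite /= /gpi1_fun val_insubd /=; have := ltn_ord i; case_ifs; lia.
Qed.

Lemma val_gpi2 m n i : (gpi2 m n i : nat) = if m < i then i - m else 0.
Proof.
by rewrite /= /gpi2_fun val_insubd /=; have := ltn_ord i; case_ifs; lia.
Qed.

Definition valE := (gcompE, gext_lift, val_gpi1, val_gpi2, lift0, val_rho, val_phi_swap).

(* Destructing [k] makes its value a single atom for [lia]: otherwise it occurs
   at the convertible but syntactically distinct types 'I_(1 + n) and 'I_n.+1. *)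
Ltac gmap_lia :=
  apply: gmap_ext_lift => -[k hk]; rewrite ?valE /=; case_ifs; lia.

Lemma gext_id n : gext (fun i : 'I_n => i) = gid n.
Proof. by apply: gmap_ext_lift => k; rewrite gext_lift. Qed.

Lemma gext_comp l m n (f : 'I_l -> 'I_m) (g : 'I_m -> 'I_n) :
  gext (g \o f) = gcomp (gext g) (gext f).
Proof. by apply: gmap_ext_lift => k; rewrite gcompE !gext_lift. Qed.

Lemma gext_cast_ord n (e : n = n) : gext (cast_ord e) = gid n.
Proof. gmap_lia. Qed.

Lemma gpi1_nat m n m' n' (f : 'I_m -> 'I_m') (g : 'I_n -> 'I_n') :
  gcomp (gpi1 m' n') (gext (phi_sum f g)) = gcomp (gext f) (gpi1 m n).
Proof.
apply: gmap_ext_lift => k; rewrite !gcompE gext_lift /phi_sum.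
case: splitP => [a | b] ka.
- have -> : gpi1 m n (lift ord0 k) = lift ord0 a.
    by apply: ord_inj; rewrite val_gpi1 !lift0 /= ka ltn_ord.
  by rewrite gext_lift !val_gpi1 !lift0 /= ltn_ord.
- have -> : gpi1 m n (lift ord0 k) = ord0.
    by apply: ord_inj; rewrite val_gpi1 lift0 /= ka; case_ifs; lia.
  by rewrite gfun0 val_gpi1 lift0 /=; case_ifs; lia.
Qed.

Lemma gpi2_nat m n m' n' (f : 'I_m -> 'I_m') (g : 'I_n -> 'I_n') :
  gcomp (gpi2 m' n') (gext (phi_sum f g)) = gcomp (gext g) (gpi2 m n).
Proof.
apply: gmap_ext_lift => k; rewrite !gcompE gext_lift /phi_sum.
case: splitP => [a | b] ka.
- have -> : gpi2 m n (lift ord0 k) = ord0.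
    by apply: ord_inj; rewrite val_gpi2 lift0 /= ka; have := ltn_ord a; case_ifs; lia.
  by rewrite gfun0 val_gpi2 lift0 /=; have := ltn_ord (f a); case_ifs; lia.
- have -> : gpi2 m n (lift ord0 k) = lift ord0 b.
    by apply: ord_inj; rewrite val_gpi2 !lift0 /= ka; case_ifs; lia.
  by rewrite gext_lift !val_gpi2 !lift0 /=; case_ifs; lia.
Qed.


Lemma gpi2_0 n : gpi2 0 n = gid n.
Proof. gmap_lia. Qed.

Lemma gpi1_n0 n : gpi1 n 0 = gext (@phi_runit n).
Proof. gmap_lia. Qed.

Lemma gpi1_gpi1 l m n :
  gcomp (gpi1 l m) (gpi1 (l + m) n) = gcomp (gpi1 l (m + n)) (gext (@phi_assoc l m n)).
Proof. gmap_lia. Qed.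

Lemma gpi2_gpi1 l m n :
  gcomp (gpi2 l m) (gpi1 (l + m) n)
  = gcomp (gcomp (gpi1 m n) (gpi2 l (m + n))) (gext (@phi_assoc l m n)).
Proof. gmap_lia. Qed.

Lemma gpi2_assoc l m n :
  gpi2 (l + m) n = gcomp (gcomp (gpi2 m n) (gpi2 l (m + n))) (gext (@phi_assoc l m n)).
Proof. gmap_lia. Qed.

Lemma gpi2_swap m n : gpi2 m n = gcomp (gpi1 n m) (gext (@phi_swap m n)).
Proof. gmap_lia. Qed.

Lemma gpi1_swap m n : gpi1 m n = gcomp (gpi2 n m) (gext (@phi_swap m n)).
Proof. gmap_lia. Qed.

Lemma rho0_gpi1 n : @rho n.+1 ord0 = gpi1 1 n.
Proof. gmap_lia. Qed.

Lemma rhoS_gpi2 n (j : 'I_n) : rho (lift ord0 j) = gcomp (rho j) (gpi2 1 n).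
Proof. gmap_lia. Qed.

Definition collapse a b : 'I_(a + b) -> 'I_(a + 1) :=
  phi_sum (fun i => i) (fun _ : 'I_b => ord0 : 'I_1).
Arguments collapse : clear implicits.

(* [u] after [v] as partial maps: the undefined points of both stages go to the
   single extra point [n]. *)
Definition pcomp k n m (u : 'I_k -> 'I_(n + 1)) (v : 'I_m -> 'I_(k + 1)) :
  'I_m -> 'I_(n + 1) :=
  (collapse n (1 + 1) \o @phi_assoc n 1 1) \o (phi_sum u (fun i : 'I_1 => i) \o v).

(* The partial map underlying a based map, with the extra point [n] of the
   codomain standing for "undefined". *)
Definition gpartial m n (f : GMap m n) : 'I_m -> 'I_(n + 1) := fun i =>
  if unlift ord0 (f (lift ord0 i)) is Some j then lshift 1 j else rshift n (ord0 : 'I_1).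

Lemma val_collapse a b (i : 'I_(a + b)) :
  (collapse a b i : nat) = if i < a then i : nat else a.
Proof. by rewrite /collapse /phi_sum; case: splitP => [j|k] /= e; lia. Qed.

Lemma val_pcomp_lo k n m (u : 'I_k -> 'I_(n + 1)) (v : 'I_m -> 'I_(k + 1)) i (j : 'I_k) :
  (v i : nat) = j -> (pcomp u v i : nat) = u j.
Proof.
move=> e; rewrite /= val_collapse /phi_assoc /= /phi_sum.
case: splitP => [j' /= e' | k' /= e']; last by have := ltn_ord j; lia.
have -> : j' = j by apply: ord_inj; rewrite -e' e.
by have := ltn_ord (u j); case_ifs; lia.
Qed.

Lemma val_pcomp_hi k n m (u : 'I_k -> 'I_(n + 1)) (v : 'I_m -> 'I_(k + 1)) i :
  k <= v i -> (pcomp u v i : nat) = n.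
Proof.
move=> e; rewrite /= val_collapse /phi_assoc /= /phi_sum.
case: splitP => [j' /= e' | k' /= e']; first by have := ltn_ord j'; lia.
by case_ifs; lia.
Qed.

Lemma val_gpartial m n (f : GMap m n) i :
  (gpartial f i : nat) =
  if (f (lift ord0 i) : nat) == 0 then n else (f (lift ord0 i) : nat) - 1.
Proof.
rewrite /gpartial; case: (unliftP ord0 (f (lift ord0 i))) => [j -> | ->].
  by rewrite lift0 /= subn1.
by rewrite /= addn0.
Qed.

Definition pvalE := (val_gpartial, val_collapse, valE).

Ltac pmap_lia := move=> -[i hi]; apply: ord_inj; rewrite ?pvalE /=; case_ifs; lia.

Lemma gpartial_gid n : gpartial (gid n) =1 lshift 1.
Proof. pmap_lia. Qed.

Lemma gpartial_gext m n (f : 'I_m -> 'I_n) : gpartial (gext f) =1 lshift 1 \o f.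
Proof. pmap_lia. Qed.

Lemma gpartial_gpi1 m n : gpartial (gpi1 m n) =1 collapse m n.
Proof. pmap_lia. Qed.

Lemma gpartial_gpi2 m n : gpartial (gpi2 m n) =1 collapse n m \o @phi_swap m n.
Proof. pmap_lia. Qed.

Lemma gpartial_rho0 n : gpartial (@rho n.+1 ord0) =1 collapse 1 n.
Proof. pmap_lia. Qed.

Lemma gpi1_gext_gpartial m n (f : GMap m n) : gcomp (gpi1 n 1) (gext (gpartial f)) = f.
Proof.
apply: gmap_ext_lift => k; rewrite ?pvalE /=.
by have := ltn_ord (f (lift ord0 k)); case_ifs; lia.
Qed.

Lemma gpartial_gcomp l m n (f : GMap l m) (g : GMap m n) :
  gpartial (gcomp g f) =1 pcomp (gpartial g) (gpartial f).
Proof.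
move=> i; apply: ord_inj; rewrite val_gpartial gcompE.
case: (unliftP ord0 (f (lift ord0 i))) => [j | ] e; rewrite e.
- have fi : (gpartial f i : nat) = j by rewrite val_gpartial e lift0 /= subn1.
  by rewrite (val_pcomp_lo _ fi) val_gpartial.
- by rewrite gfun0 /= val_pcomp_hi // val_gpartial e.
Qed.

Lemma gpartial_rhoS n (j : 'I_n) :
  gpartial (@rho n.+1 (lift ord0 j)) =1 pcomp (gpartial (rho j)) (@phi_swap 1 n).
Proof.
move=> i; apply: ord_inj; rewrite val_gpartial !valE /=.
have [i0 | i_pos] := ltnP i 1.
  by rewrite val_pcomp_hi ?val_phi_swap ?i0; case_ifs; lia.
have lt_i1 : i - 1 < n by have := ltn_ord i; lia.
rewrite (val_pcomp_lo _ (j := Ordinal lt_i1)); last by rewrite val_phi_swap ltnNge i_pos.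
by rewrite !pvalE /=; case_ifs; lia.
Qed.

Section HtyToSpecial.
Variables (M : CartEqCat) (X : HtyAlgOb M).
Local Notation Xm := (hXmap X).

Definition hproj a b : Hom (X (a + b)) (X a) := cmp pr1 (xi X a b).
Definition hdrop n : Hom (X (n + 1)) (X n) := hproj n 1.

Lemma eq_hXmap m n (f g : 'I_m -> 'I_n) : f =1 g -> Xm f = Xm g.
Proof. by move=> /functional_extensionality ->. Qed.

Lemma hproj_nat a b a' b' (f : 'I_a -> 'I_a') (g : 'I_b -> 'I_b') :
  cmp (hproj a' b') (Xm (phi_sum f g)) = cmp (Xm f) (hproj a b).
Proof. by rewrite /hproj -cmp_assoc xi_nat pr1_fprod_cmp. Qed.

Lemma hproj_collapse a b : hproj a b = cmp (hdrop a) (Xm (collapse a b)).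
Proof. by rewrite /hdrop /collapse hproj_nat hX_id cmp_idl. Qed.

Lemma pr2_xi a b : cmp pr2 (xi X a b) = cmp (hproj b a) (Xm (@phi_swap a b)).
Proof. by rewrite /hproj -cmp_assoc -xi_sym cmp_assoc /swapM pair_pr1. Qed.

Lemma hdrop_hdrop n :
  cmp (hdrop n) (hdrop (n + 1)) = cmp (hdrop n) (Xm (collapse n (1 + 1) \o @phi_assoc n 1 1)).
Proof.
have coassoc :
    cmp (hdrop n) (hdrop (n + 1)) = cmp (hproj n (1 + 1)) (Xm (@phi_assoc n 1 1)).
  by move: (xi_coassoc X n 1 1) => /(f_equal (cmp pr1)); rewrite /assocM; prd_simpl.
by rewrite coassoc hproj_collapse -cmp_assoc -hX_comp.
Qed.

Lemma hdrop_lshift n : cmp (hdrop n) (Xm (lshift 1)) = idm (X n).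
Proof.
have runit : cmp (hdrop n) (Xm (collapse n 0)) = Xm (@phi_runit n).
  by rewrite -hproj_collapse /hproj -(xi_runit X n) pr1_fprod_cmp cmp_idl.
have lshift_collapse : lshift 1 =1 collapse n 0 \o cast_ord (esym (addn0 n)).
  move=> i; apply: ord_inj; rewrite /= val_collapse /=; have := ltn_ord i; case_ifs; lia.
rewrite (eq_hXmap lshift_collapse) hX_comp cmp_assoc runit -hX_comp -hX_id.
by apply: eq_hXmap => i; apply: ord_inj.
Qed.

(* Rewrites below are targeted: [hdrop] is a composite, and an unguided
   [cmp_assoc] unfolds it. *)
Lemma hdrop_pcomp k n m (u : 'I_k -> 'I_(n + 1)) (v : 'I_m -> 'I_(k + 1)) :
  cmp (cmp (hdrop n) (Xm u)) (cmp (hdrop k) (Xm v)) = cmp (hdrop n) (Xm (pcomp u v)).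
Proof.
have drop_nat :
    cmp (Xm u) (hdrop k) = cmp (hdrop (n + 1)) (Xm (phi_sum u (fun i : 'I_1 => i))).
  exact: esym (hproj_nat u (fun i : 'I_1 => i)).
rewrite -cmp_assoc [cmp (Xm u) _]cmp_assoc drop_nat.
rewrite -[cmp (cmp (hdrop (n + 1)) _) _]cmp_assoc cmp_assoc hdrop_hdrop -cmp_assoc.
by rewrite -!hX_comp.
Qed.

Definition hty_gmap m n (f : GMap m n) : Hom (X m) (X n) := cmp (hdrop n) (Xm (gpartial f)).

Lemma hty_gmap_gid n : hty_gmap (gid n) = idm (X n).
Proof. by rewrite /hty_gmap (eq_hXmap (@gpartial_gid n)) hdrop_lshift. Qed.

Lemma hty_gmap_gcomp l m n (f : GMap l m) (g : GMap m n) :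
  hty_gmap (gcomp g f) = cmp (hty_gmap g) (hty_gmap f).
Proof. by rewrite /hty_gmap hdrop_pcomp (eq_hXmap (gpartial_gcomp f g)). Qed.

Lemma hty_gmap_rho0 n : hty_gmap (@rho n.+1 ord0) = hproj 1 n.
Proof. by rewrite /hty_gmap (eq_hXmap (@gpartial_rho0 n)) hproj_collapse. Qed.

Lemma hty_gmap_rhoS n (j : 'I_n) :
  hty_gmap (@rho n.+1 (lift ord0 j)) = cmp (hty_gmap (rho j)) (cmp pr2 (xi X 1 n)).
Proof. by rewrite pr2_xi /hty_gmap hdrop_pcomp (eq_hXmap (gpartial_rhoS j)). Qed.

Lemma hty_gmap_special n : equiv (tup (fun j : 'I_n => hty_gmap (rho j))).
Proof.
elim: n => [|n IH] /=; first by rewrite -(bang_uniq (xi0 X)); exact: xi0_equiv.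
rewrite hty_gmap_rho0 (functional_extensionality _ _ (@hty_gmap_rhoS n)) tup_cmp.
have -> : pair (hproj 1 n) (cmp (tup (fun j : 'I_n => hty_gmap (rho j))) (cmp pr2 (xi X 1 n)))
  = cmp (fprod (idm _) (tup (fun j : 'I_n => hty_gmap (rho j)))) (xi X 1 n).
  by rewrite /fprod pair_cmp -!cmp_assoc cmp_idl.
exact: equiv_comp (xi_equiv X 1 n) (equiv_prod (equiv_idm _) IH).
Qed.

Definition special_of_hty : SpecialOb M :=
  {| sY := hX X; sYmap := hty_gmap; sY_id := hty_gmap_gid; sY_comp := hty_gmap_gcomp;
     sY_special := hty_gmap_special |}.

End HtyToSpecial.

Section SpecialToHty.
Variables (M : CartEqCat) (Y : SpecialOb M).
Local Notation Ym := (sYmap Y).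

Definition sxi m n : Hom (Y (m + n)) (prd (Y m) (Y n)) :=
  pair (Ym (gpi1 m n)) (Ym (gpi2 m n)).

Lemma sYmap_cmp (c : M) l m n (f : GMap l m) (g : GMap m n) (h : Hom c (Y l)) :
  cmp (Ym g) (cmp (Ym f) h) = cmp (Ym (gcomp g f)) h.
Proof. by rewrite cmp_assoc sY_comp. Qed.

Lemma sYmap_gext_id n : Ym (gext (fun i : 'I_n => i)) = idm (Y n).
Proof. by rewrite gext_id sY_id. Qed.

Lemma sYmap_gext_comp l m n (f : 'I_l -> 'I_m) (g : 'I_m -> 'I_n) :
  Ym (gext (g \o f)) = cmp (Ym (gext g)) (Ym (gext f)).
Proof. by rewrite gext_comp sY_comp. Qed.

Lemma sxi_nat m m' n n' (f : 'I_m -> 'I_m') (g : 'I_n -> 'I_n') :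
  cmp (sxi m' n') (Ym (gext (phi_sum f g)))
  = cmp (fprod (Ym (gext f)) (Ym (gext g))) (sxi m n).
Proof. by rewrite /sxi pair_cmp fprod_pair -!sY_comp gpi1_nat gpi2_nat. Qed.

Lemma sxi_coassoc l m n :
  cmp (assocM _ _ _) (cmp (fprod (sxi l m) (idm _)) (sxi (l + m) n))
  = cmp (fprod (idm _) (sxi m n)) (cmp (sxi l (m + n)) (Ym (gext (@phi_assoc l m n)))).
Proof.
rewrite /sxi /assocM; prd_ext; rewrite ?sYmap_cmp -?sY_comp.
- by rewrite gpi1_gpi1.
- by rewrite gpi2_gpi1.
- by rewrite -gpi2_assoc.
Qed.

Lemma sxi_lunit n :
  cmp pr2 (cmp (fprod (bang (Y 0)) (idm _)) (sxi 0 n)) = Ym (gext (@phi_lunit n)).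
Proof. by rewrite /sxi; prd_simpl; rewrite gpi2_0 gext_cast_ord. Qed.

Lemma sxi_runit n :
  cmp pr1 (cmp (fprod (idm _) (bang (Y 0))) (sxi n 0)) = Ym (gext (@phi_runit n)).
Proof. by rewrite /sxi; prd_simpl; rewrite gpi1_n0. Qed.

Lemma sxi_sym m n : cmp (swapM _ _) (sxi m n) = cmp (sxi n m) (Ym (gext (@phi_swap m n))).
Proof.
rewrite /sxi /swapM; prd_ext; rewrite -sY_comp.
- by rewrite -gpi2_swap.
- by rewrite -gpi1_swap.
Qed.

Lemma sxi0_equiv n : equiv (sxi 0 n).
Proof.
have pr2_sxi : cmp pr2 (sxi 0 n) = idm (Y n) by rewrite /sxi pair_pr2 gpi2_0 sY_id.
apply: (@equiv_2of3_l _ _ _ _ _ pr2); first by rewrite pr2_sxi; exact: equiv_idm.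
have -> : @pr2 M (Y 0) (Y n) = cmp pr2 (fprod (bang (Y 0)) (idm (Y n))).
  by rewrite pair_pr2 cmp_idl.
exact: equiv_comp (equiv_prod (sY_special Y 0) (equiv_idm _)) (equiv_iso (pr2_one_iso _)).
Qed.

Lemma sxi1_equiv n : equiv (sxi 1 n).
Proof.
have tupS : tup (fun j : 'I_n.+1 => Ym (rho j))
    = cmp (fprod (idm (Y 1)) (tup (fun j : 'I_n => Ym (rho j)))) (sxi 1 n).
  rewrite /sxi fprod_pair cmp_idl -tup_cmp /= rho0_gpi1; congr pair.
  by congr tup; apply: functional_extensionality => j; rewrite -sY_comp rhoS_gpi2.
apply: (@equiv_2of3_l _ _ _ _ _ (fprod (idm (Y 1)) (tup (fun j : 'I_n => Ym (rho j))))).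
  by rewrite -tupS; exact: sY_special.
exact: equiv_prod (equiv_idm _) (sY_special Y n).
Qed.

Lemma sxi_equiv m n : equiv (sxi m n).
Proof.
elim: m => [|m IH]; first exact: sxi0_equiv.
have coassoc := sxi_coassoc 1 m n.
rewrite gext_cast_ord sY_id cmp_idr in coassoc.
apply: (@equiv_2of3_l _ _ _ _ _ (cmp (assocM _ _ _) (fprod (sxi 1 m) (idm (Y n))))).
  rewrite -cmp_assoc coassoc.
  exact: equiv_comp (sxi1_equiv (m + n)) (equiv_prod (equiv_idm _) IH).
exact: equiv_comp (equiv_prod (sxi1_equiv m) (equiv_idm _)) (equiv_iso (assocM_iso _ _ _)).
Qed.

Definition hty_of_special : HtyAlgOb M :=
  {| hX := sY Y; hXmap := fun m n f => Ym (gext f); hX_id := sYmap_gext_id;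
     hX_comp := sYmap_gext_comp; xi := sxi; xi0 := bang (Y 0); xi_nat := sxi_nat;
     xi_coassoc := sxi_coassoc; xi_lunit := sxi_lunit; xi_runit := sxi_runit;
     xi_sym := sxi_sym; xi_equiv := sxi_equiv; xi0_equiv := sY_special Y 0 |}.

End SpecialToHty.

Section RoundTrips.
Variable M : CartEqCat.

Lemma hty_gmap_gext (X : HtyAlgOb M) m n (f : 'I_m -> 'I_n) :
  hty_gmap X (gext f) = hXmap X f.
Proof.
by rewrite /hty_gmap (eq_hXmap X (gpartial_gext f)) hX_comp cmp_assoc hdrop_lshift cmp_idl.
Qed.

Lemma sxi_special_of_hty (X : HtyAlgOb M) m n : sxi (special_of_hty X) m n = xi X m n.
Proof.
rewrite /sxi /= /hty_gmap (eq_hXmap X (@gpartial_gpi1 m n)) (eq_hXmap X (@gpartial_gpi2 m n)).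
rewrite -hproj_collapse hX_comp cmp_assoc -hproj_collapse -pr2_xi.
by rewrite -pair_uniq.
Qed.

Lemma HtyAlgOb_eq (h : nat -> M)
    (m1 m2 : forall m n, ('I_m -> 'I_n) -> Hom (h m) (h n)) id1 id2 c1 c2
    (x1 x2 : forall m n, Hom (h (m + n)) (prd (h m) (h n))) (z1 z2 : Hom (h 0) one)
    nat1 nat2 co1 co2 l1 l2 r1 r2 s1 s2 e1 e2 ez1 ez2 :
  m1 = m2 -> x1 = x2 -> z1 = z2 ->
  @Build_HtyAlgOb M h m1 id1 c1 x1 z1 nat1 co1 l1 r1 s1 e1 ez1
  = @Build_HtyAlgOb M h m2 id2 c2 x2 z2 nat2 co2 l2 r2 s2 e2 ez2.
Proof. by move=> Em Ex Ez; subst; f_equal; apply: proof_irrelevance. Qed.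

Lemma SpecialOb_eq (h : nat -> M) (m1 m2 : forall m n, GMap m n -> Hom (h m) (h n))
    id1 id2 c1 c2 s1 s2 :
  m1 = m2 -> @Build_SpecialOb M h m1 id1 c1 s1 = @Build_SpecialOb M h m2 id2 c2 s2.
Proof. by move=> Em; subst; f_equal; apply: proof_irrelevance. Qed.

Lemma special_of_htyK : cancel (@special_of_hty M) (@hty_of_special M).
Proof.
move=> X; have gext_map := @hty_gmap_gext X; have sxi_xi := @sxi_special_of_hty X.
move: gext_map sxi_xi; case: X => h hm hid hc x x0 hn hco hl hr hs he he0 /= gext_map sxi_xi.
apply: HtyAlgOb_eq.
- apply: functional_extensionality_dep => m; apply: functional_extensionality_dep => n.
  exact: functional_extensionality (gext_map m n).
- apply: functional_extensionality_dep => m; exact: functional_extensionality_dep (sxi_xi m).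
- exact: esym (bang_uniq x0).
Qed.

Lemma hty_of_specialK : cancel (@hty_of_special M) (@special_of_hty M).
Proof.
case=> h hm hid hc hs; apply: SpecialOb_eq.
apply: functional_extensionality_dep => m; apply: functional_extensionality_dep => n.
apply: functional_extensionality => f.
by rewrite /hty_gmap /hdrop /hproj /= /sxi pair_pr1 -hc gpi1_gext_gpartial.
Qed.

End RoundTrips.

Section Morphisms.
Variables (M : CartEqCat) (X Y : HtyAlgOb M).

Lemma hty_gmap_hsig (s : HtyAlgHom X Y) m n (f : GMap m n) :
  cmp (hty_gmap Y f) (s m) = cmp (s n) (hty_gmap X f).
Proof.
have hdrop_hsig : cmp (hdrop Y n) (s (n + 1)) = cmp (s n) (hdrop X n).
  by rewrite /hdrop /hproj -cmp_assoc hsig_xi pr1_fprod_cmp.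
by rewrite /hty_gmap -cmp_assoc (hsig_nat s) cmp_assoc hdrop_hsig -cmp_assoc.
Qed.

Definition special_hom_of_hty (s : HtyAlgHom X Y) :
  SpecialHom (special_of_hty X) (special_of_hty Y) :=
  @Build_SpecialHom M (special_of_hty X) (special_of_hty Y) (fun n => s n) (hty_gmap_hsig s).

Section Inverse.
Variable s : SpecialHom (special_of_hty X) (special_of_hty Y).

Lemma ssig_hXmap m n (f : 'I_m -> 'I_n) : cmp (hXmap Y f) (s m) = cmp (s n) (hXmap X f).
Proof. by rewrite -!hty_gmap_gext; exact: (ssig_nat s (gext f)). Qed.

Lemma ssig_xi m n : cmp (xi Y m n) (s (m + n)) = cmp (fprod (s m) (s n)) (xi X m n).
Proof.
rewrite -!sxi_special_of_hty /sxi pair_cmp fprod_pair.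
by rewrite (ssig_nat s (gpi1 m n)) (ssig_nat s (gpi2 m n)).
Qed.

Lemma ssig_xi0 : cmp (xi0 Y) (s 0) = xi0 X.
Proof. by rewrite (bang_uniq (cmp _ _)) (bang_uniq (xi0 X)). Qed.

Definition hty_hom_of_special : HtyAlgHom X Y :=
  @Build_HtyAlgHom M X Y (fun n => s n) ssig_hXmap ssig_xi ssig_xi0.

End Inverse.

Lemma special_hom_of_hty_bij : bijective special_hom_of_hty.
Proof.
exists hty_hom_of_special.
- by case=> s p1 p2 p3; rewrite /hty_hom_of_special /=; f_equal; apply: proof_irrelevance.
- by case=> s p1; rewrite /special_hom_of_hty /=; f_equal; apply: proof_irrelevance.
Qed.

End Morphisms.

Theorem corollary3p1p3 (M : CartEqCat) :
  exists (F0 : HtyAlgOb M -> SpecialOb M)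
         (F1 : forall X Y : HtyAlgOb M, HtyAlgHom X Y -> SpecialHom (F0 X) (F0 Y)),
    [/\ (forall (X : HtyAlgOb M) (h : HtyAlgHom X X),
           (forall n, h n = idm (X n)) -> forall n, F1 X X h n = idm (F0 X n)),
        (forall (X Y Z : HtyAlgOb M) (f : HtyAlgHom X Y) (g : HtyAlgHom Y Z)
                (h : HtyAlgHom X Z),
           (forall n, h n = cmp (g n) (f n)) ->
           forall n, F1 X Z h n = cmp (F1 Y Z g n) (F1 X Y f n)),
        bijective F0 &
        forall X Y : HtyAlgOb M, bijective (F1 X Y)].
Proof.
exists (@special_of_hty M), (@special_hom_of_hty M); split => //.
- by exists (@hty_of_special M); [exact: special_of_htyK | exact: hty_of_specialK].
- exact: special_hom_of_hty_bij.
Qed.
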